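(* Let $A_1,\ldots,A_n$ be events in a probability space, let $X$ be the number of these events that occur, and for $1\le j\le n$ let $S_j=\sum_{1\le i_1<\cdots<i_j\le n}P(A_{i_1}\cdots A_{i_j})$. Let $k$ be an integer with $1\le k<n$. For distinct indices $i_1,\ldots,i_k\in\{1,\ldots,n\}$ and $1\le s\le n-k$, let $W_s(i_1,\ldots,i_k)$ be the $s$-th largest of the $n-k$ values $P(A_{i_1}\cdots A_{i_k}A_j)$, $j\in\{1,\ldots,n\}\setminus\{i_1,\ldots,i_k\}$ (counted with multiplicity). Let $$V=\sum_{1\le r_1<\cdots<r_k\le n}\ \sum_{s=1}^{n-k}W_s(r_1,\ldots,r_k)\frac{k}{(k+s)(k+s-1)}.$$ If $k$ is even then $P(X\ge 1)\ge\sum_{j=1}^{k}(-1)^{j+1}S_j+V$, and if $k$ is odd then $P(X\ge 1)\le\sum_{j=1}^{k}(-1)^{j+1}S_j-V$.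
   Context: $A_{i_1}\cdots A_{i_j}$ denotes the intersection of the events. *)

From HB Require Import structures.
From mathcomp Require Import all_boot all_order all_algebra.
From mathcomp Require Import all_classical all_reals all_analysis.
Set Implicit Arguments. Unset Strict Implicit. Unset Printing Implicit Defensive.
Import Order.TTheory GRing.Theory Num.Theory.
Local Open Scope classical_set_scope.
Local Open Scope ring_scope.

Section Defs.
Context {d : measure_display} {T : measurableType d} {R : realType}.

(* real-valued probability of an event (P is finite, so fine is exact) *)
Definition Pr (P : probability T R) (B : set T) : R := fine (P B).

Definition inter_ev (n : nat) (A : 'I_n -> set T) (I : {set 'I_n}) : set T :=
  \bigcap_(i in [set i | i \in I]) A i.

Definition numOcc (n : nat) (A : 'I_n -> set T) (x : T) : nat :=
  #|[set i : 'I_n | `[< A i x >]]|.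

Definition Sj (P : probability T R) (n : nat) (A : 'I_n -> set T) (j : nat) : R :=
  \sum_(I : {set 'I_n} | #|I| == j) Pr P (inter_ev A I).

Definition Wlist (P : probability T R) (n : nat) (A : 'I_n -> set T)
    (I : {set 'I_n}) : seq R :=
  sort >=%R [seq Pr P (inter_ev A I `&` A j) | j <- enum (~: I)].

(* W_s(I) = s-th largest value (s is 1-indexed) *)
Definition W (P : probability T R) (n : nat) (A : 'I_n -> set T)
    (I : {set 'I_n}) (s : nat) : R :=
  nth 0 (Wlist P A I) s.-1.

Definition V (P : probability T R) (n : nat) (A : 'I_n -> set T) (k : nat) : R :=
  \sum_(I : {set 'I_n} | #|I| == k)
    \sum_(1 <= s < (n - k).+1)
      W P A I s * (k%:R / ((k + s)%:R * (k + s - 1)%:R)).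

End Defs.

From HB Require Import structures.
From mathcomp Require Import all_boot all_order all_algebra.
From mathcomp Require Import all_classical all_reals all_analysis.
From mathcomp Require Import ring lra.
Import Order.TTheory GRing.Theory Num.Theory.
Local Open Scope classical_set_scope.
Local Open Scope ring_scope.

(* Split the space into the atoms [occ = J], J a set of indices, with masses
   p_J.  Then P(X >= 1) = sum_{J nonempty} p_J and S_j = sum_J C(|J|, j) p_J,
   and the identity sum_{j=1}^k (-1)^(j+1) C(m, j) = [m > 0] - (-1)^k C(m-1, k)
   shows that the Bonferroni sum equals P(X >= 1) - (-1)^k D with
   D = sum_J C(|J|-1, k) p_J.  It remains to prove V <= D.  For |I| = k,
   P(A_I A_j) is the sum of the p_J over J containing I and j, so for any
   ordering j_1, j_2, ... of the complement of I,
   sum_s c_s P(A_I A_{j_s}) = sum_{J containing I} p_J sum_{s : j_s in J} c_s.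
   The weights c_s = k / ((k+s)(k+s-1)) decrease and exactly |J| - k of the
   j_s lie in J, so the inner sum is at most c_1 + ... + c_{|J|-k}
   = (|J| - k) / |J|; summing over the C(|J|, k) sets I inside J gives
   C(|J|, k) (|J| - k) / |J| = C(|J|-1, k). *)

Set Implicit Arguments. Unset Strict Implicit. Unset Printing Implicit Defensive.

Lemma sum_signed_bin (R : comPzRingType) (k m : nat) : (0 < k)%N ->
  \sum_(1 <= j < k.+1) (-1) ^+ j.+1 * 'C(m, j)%:R
    = (0 < m)%:R - (-1) ^+ k * 'C(m.-1, k)%:R :> R.
Proof.
case: m => [|m] k_gt0.
  rewrite big_nat_cond big1 => [|j /andP[/andP[j_gt0 _] _]].
    by rewrite bin0n eqn0Ngt k_gt0 mulr0 subr0.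
  by rewrite bin0n eqn0Ngt j_gt0 mulr0.
rewrite ltn0Sn /= {k_gt0}; elim: k => [|k IHk].
  by rewrite big_geq // bin0 expr0 mul1r subrr.
by rewrite big_nat_recr //= IHk binS natrD !exprS; ring.
Qed.

Lemma sum_card_sub (V : nmodType) (T : finType) (f : {set T} -> V) (j : nat) :
  \sum_(I : {set T} | #|I| == j) \sum_(J : {set T} | I \subset J) f J
    = \sum_J f J *+ 'C(#|J|, j).
Proof.
rewrite (exchange_big_dep xpredT) //=; apply: eq_bigr => J _.
rewrite -cards_draws -sumr_const; apply: eq_bigl => I.
by rewrite !inE andbC.
Qed.

Lemma sum_select_nonincr_le (R : numDomainType) (c : nat -> R) (b : pred nat)
    (L : nat) :
  {homo c : i j / (i <= j)%N >-> j <= i} ->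
  \sum_(0 <= i < L | b i) c i <= \sum_(0 <= i < count b (iota 0 L)) c i.
Proof.
move=> c_nonincr; elim: L => [|L IHL]; first by rewrite !big_geq.
have count_le : (count b (iota 0 L) <= L)%N.
  by rewrite -[X in (_ <= X)%N](size_iota 0 L) count_size.
rewrite big_mkcond big_nat_recr // -big_mkcond -[L.+1]addn1 iotaD count_cat /=.
rewrite add0n addn0; case: (b L) => /=; last by rewrite addr0 addn0.
by rewrite addn1 big_nat_recr //= lerD ?c_nonincr.
Qed.

Lemma count_perm_setC (T : finType) (I J : {set T}) (e : seq T) :
  perm_eq e (enum (~: I)) -> I \subset J -> count (mem J) e = (#|J| - #|I|)%N.
Proof.
move=> pe sIJ; have e_uniq : uniq e by rewrite (perm_uniq pe) enum_uniq.
rewrite -size_filter -(card_uniqP (filter_uniq _ e_uniq)) -cardsDS //.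
by apply: eq_card => x; rewrite mem_filter (perm_mem pe) mem_enum !inE andbC.
Qed.

Lemma sum_mass_above_rearrange_le (R : realDomainType) (T : finType)
    (p : {set T} -> R) (I : {set T}) (e : seq T) (x0 : T) (c : nat -> R) :
  (forall J, 0 <= p J) -> perm_eq e (enum (~: I)) ->
  {homo c : i j / (i <= j)%N >-> j <= i} ->
  \sum_(0 <= i < size e)
      (\sum_(J : {set T} | nth x0 e i |: I \subset J) p J) * c i
    <= \sum_(J : {set T} | I \subset J) p J * \sum_(0 <= i < #|J| - #|I|) c i.
Proof.
move=> p_ge0 pe c_nonincr.
have mass_above_setU1 j : \sum_(J : {set T} | j |: I \subset J) p J
    = \sum_(J : {set T} | I \subset J) p J * (j \in J)%:R.
  rewrite big_mkcond [RHS]big_mkcond; apply: eq_bigr => J _.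
  rewrite finset.subUset finset.sub1set.
  by case: (j \in J); case: (I \subset J); rewrite ?mulr1 ?mulr0.
under eq_bigr do rewrite mass_above_setU1 mulr_suml.
rewrite exchange_big; apply: ler_sum => J sIJ.
rewrite (_ : \sum_(_ <= i < _) _
    = p J * \sum_(0 <= i < size e | nth x0 e i \in J) c i).
  apply: ler_wpM2l => //; apply: le_trans (sum_select_nonincr_le _ _ c_nonincr) _.
  rewrite -(count_perm_setC pe sIJ).
  by rewrite -[in X in _ <= \sum_(0 <= i < count _ X) _](mkseq_nth x0 e) count_map.
rewrite mulr_sumr [RHS]big_mkcond; apply: eq_bigr => i _.
by case: (_ \in J); rewrite ?mulr1 ?mulr0 ?mul0r.
Qed.

Section BonferroniWeight.
Context {R : realFieldType} (k : nat).

Definition bonf_weight (s : nat) : R := k%:R / ((k + s)%:R * (k + s - 1)%:R).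

Lemma bonf_weightS s : bonf_weight s.+1 = k%:R / ((k + s.+1)%:R * (k + s)%:R).
Proof. by rewrite /bonf_weight addnS subn1. Qed.

Hypothesis k_gt0 : (0 < k)%N.

Lemma bonf_weight_nonincr :
  {homo (fun s => bonf_weight s.+1) : i j / (i <= j)%N >-> j <= i}.
Proof.
move=> i j le_ij.
have den_gt0 s : 0 < (k + s.+1)%:R * (k + s)%:R :> R.
  by rewrite -natrM ltr0n muln_gt0 !addn_gt0 k_gt0.
rewrite !bonf_weightS ler_wpM2l // lef_pV2 ?posrE ?den_gt0 // -!natrM ler_nat.
by rewrite leq_mul // ?ltnS leq_add2l.
Qed.

(* The weights telescope: [bonf_weight s = k / (k + s - 1) - k / (k + s)]. *)
Lemma sum_bonf_weight t : \sum_(0 <= i < t) bonf_weight i.+1 = t%:R / (k + t)%:R.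
Proof.
elim: t => [|t IHt]; first by rewrite big_geq // mul0r.
have kt_neq0 : (k + t)%:R != 0 :> R by rewrite pnatr_eq0 -lt0n addn_gt0 k_gt0.
have kt1_neq0 : (k + t).+1%:R != 0 :> R by rewrite pnatr_eq0.
rewrite big_nat_recr //= IHt bonf_weightS addnS.
move: kt_neq0 kt1_neq0; rewrite !mulrS natrD => {}kt_neq0 {}kt1_neq0.
by field; rewrite kt_neq0 kt1_neq0.
Qed.

Lemma sum_bonf_weight_bin m :
  (\sum_(0 <= i < m - k) bonf_weight i.+1) * 'C(m, k)%:R = 'C(m.-1, k)%:R.
Proof.
have [lt_mk|le_km] := ltnP m k.
  by rewrite !bin_small ?mulr0 // (leq_ltn_trans (leq_pred m)).
have m_neq0 : m%:R != 0 :> R by rewrite pnatr_eq0 -lt0n (leq_trans k_gt0).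
apply: (mulfI m_neq0); rewrite -natrM mul_bin_down natrM sum_bonf_weight subnKC //.
by field.
Qed.

End BonferroniWeight.

Section Atoms.
Context {d : measure_display} {T : measurableType d} {R : realType}.
Variables (P : probability T R) (n : nat) (A : 'I_n -> set T).
Hypothesis mA : forall i, measurable (A i).

Lemma Pr_ge0 (B : set T) : 0 <= Pr P B.
Proof. exact/fine_ge0/measure_ge0. Qed.

Lemma Pr_setU (B C : set T) : measurable B -> measurable C -> B `&` C = set0 ->
  Pr P (B `|` C) = Pr P B + Pr P C.
Proof. by move=> mB mC BC0; rewrite /Pr measureU // fineD ?fin_num_measure. Qed.

Definition occ (x : T) : {set 'I_n} := [set i | `[< A i x >]].

Lemma numOccE x : numOcc A x = #|occ x|.
Proof.
by apply: eq_card => i; rewrite [RHS]inE; apply/idP/idP => [/set_mem|/mem_set].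
Qed.

Definition atom (J : {set 'I_n}) : set T := [set x | occ x = J].

Lemma measurable_atom J : measurable (atom J).
Proof.
have -> : atom J = \bigcap_(i in [set: 'I_n]) (if i \in J then A i else ~` A i).
  apply/seteqP; split=> [x /= <- i _|x AJx]; first by rewrite inE; case: asboolP.
  by apply/setP => i; rewrite inE; have := AJx i I; case: (i \in J); case: asboolP.
apply: fin_bigcap_measurable => [|i _]; first exact: finite_finset.
by case: (i \in J); [exact: mA | exact/measurableC/mA].
Qed.

Lemma measurable_occ (Q : pred {set 'I_n}) : measurable [set x | Q (occ x)].
Proof.
have -> : [set x | Q (occ x)] = \bigcup_(J in [set J | Q J]) atom J.
  by apply/seteqP; split=> [x Qx|x [J QJ /= ->]] //; exists (occ x).
apply: fin_bigcup_measurable => [|J _]; first exact: finite_finset.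
exact: measurable_atom.
Qed.

Lemma Pr_occ_seq (s : seq {set 'I_n}) :
  uniq s -> Pr P [set x | occ x \in s] = \sum_(J <- s) Pr P (atom J).
Proof.
elim: s => [_|J s IHs /andP[Js s_uniq]].
  rewrite big_nil (_ : [set x | _] = set0) ?/Pr ?measure0 //.
  by apply/seteqP; split.
have -> : [set x | occ x \in J :: s] = atom J `|` [set x | occ x \in s].
  apply/seteqP; split=> x /=; rewrite inE.
    by case/orP => [/eqP|]; [left|right].
  by case=> [->|->]; rewrite ?eqxx ?orbT.
rewrite Pr_setU ?big_cons ?IHs //.
- exact: measurable_atom.
- exact: measurable_occ.
- by apply/seteqP; split=> // x [/= ->]; rewrite (negbTE Js).
Qed.

Lemma Pr_occ (Q : pred {set 'I_n}) :
  Pr P [set x | Q (occ x)] = \sum_(J | Q J) Pr P (atom J).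
Proof.
rewrite -big_filter -Pr_occ_seq ?filter_uniq ?index_enum_uniq //.
congr (Pr P _); apply/seteqP.
by split=> x /=; rewrite mem_filter mem_index_enum andbT.
Qed.

Lemma inter_evE I : inter_ev A I = [set x | I \subset occ x].
Proof.
apply/seteqP; split=> x /=.
  by move=> AIx; apply/fintype.subsetP => i iI; rewrite inE; apply/asboolP/AIx.
by move/fintype.subsetP => sIx i /= iI; move: (sIx i iI); rewrite inE => /asboolP.
Qed.

Lemma Pr_inter_ev I :
  Pr P (inter_ev A I) = \sum_(J : {set 'I_n} | I \subset J) Pr P (atom J).
Proof. by rewrite inter_evE (Pr_occ (fun J => I \subset J)). Qed.

Lemma inter_ev_setU1 I j : inter_ev A I `&` A j = inter_ev A (j |: I).
Proof.
rewrite !inter_evE; apply/seteqP; split=> x /=.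
all: rewrite finset.subUset finset.sub1set inE.
  by move=> [-> /asboolP ->].
by case/andP => /asboolP Ajx sIx.
Qed.

Lemma Sj_atoms j : Sj P A j = \sum_J Pr P (atom J) *+ 'C(#|J|, j).
Proof. by rewrite -sum_card_sub; apply: eq_bigr => I _; exact: Pr_inter_ev. Qed.

Lemma Pr_numOcc_gt0 :
  Pr P [set x | (1 <= numOcc A x)%N] = \sum_J Pr P (atom J) *+ (0 < #|J|)%N.
Proof.
have -> : [set x | (1 <= numOcc A x)%N] = [set x | (0 < #|occ x|)%N].
  by apply/seteqP; split=> x /=; rewrite numOccE.
rewrite (Pr_occ (fun J => 0 < #|J|)%N) big_mkcond.
by apply: eq_bigr => J _; case: (0 < #|J|)%N.
Qed.

Lemma bonferroni_sum_atoms k : (0 < k)%N ->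
  \sum_(1 <= j < k.+1) (-1) ^+ j.+1 * Sj P A j
    = Pr P [set x | (1 <= numOcc A x)%N]
      - (-1) ^+ k * \sum_J Pr P (atom J) *+ 'C(#|J|.-1, k).
Proof.
move=> k_gt0; rewrite Pr_numOcc_gt0 mulr_sumr -sumrB.
under eq_big_nat => j _ do rewrite Sj_atoms mulr_sumr.
rewrite exchange_big; apply: eq_bigr => J _.
transitivity (Pr P (atom J) * \sum_(1 <= j < k.+1) (-1) ^+ j.+1 * 'C(#|J|, j)%:R).
  by rewrite mulr_sumr; apply: eq_bigr => j _; rewrite -[_ *+ _]mulr_natr mulrCA.
by rewrite sum_signed_bin // mulrBr mulrCA !mulr_natr.
Qed.

Lemma V_le_atoms k : (0 < k)%N -> (k < n)%N ->
  V P A k <= \sum_J Pr P (atom J) *+ 'C(#|J|.-1, k).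
Proof.
move=> k_gt0 k_lt_n; pose x0 := Ordinal k_lt_n.
under [X in _ <= X]eq_bigr => J _.
  rewrite -[_ *+ _]mulr_natr -(sum_bonf_weight_bin k_gt0 #|J|) mulrA mulr_natr.
over.
rewrite -sum_card_sub; apply: ler_sum => I /eqP cardI.
rewrite big_add1 /= /W /Wlist sort_map; set e := sort _ _.
have pe : perm_eq e (enum (~: I)) := permEl (perm_sort _ _).
have size_e : size e = (n - k)%N.
  by rewrite (perm_size pe) -cardE cardsCs finset.setCK card_ord cardI.
rewrite -size_e.
under eq_big_nat => i /andP[_ lt_i_e].
  rewrite (nth_map x0) // inter_ev_setU1 Pr_inter_ev.
over.
have := sum_mass_above_rearrange_le x0 (fun J => Pr_ge0 (atom J)) pe
  (bonf_weight_nonincr k_gt0).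
by rewrite cardI.
Qed.

End Atoms.

Theorem theorem5 (d : measure_display) (T : measurableType d) (R : realType)
    (P : probability T R) (n : nat) (A : 'I_n -> set T)
    (mA : forall i, measurable (A i)) (k : nat)
    (hk1 : (1 <= k)%N) (hkn : (k < n)%N) :
  (~~ odd k ->
     \sum_(1 <= j < k.+1) (-1) ^+ j.+1 * Sj P A j + V P A k
       <= Pr P [set x | (1 <= numOcc A x)%N]) /\
  (odd k ->
     Pr P [set x | (1 <= numOcc A x)%N]
       <= \sum_(1 <= j < k.+1) (-1) ^+ j.+1 * Sj P A j - V P A k).
Proof.
have V_le := V_le_atoms P mA hk1 hkn.
rewrite (bonferroni_sum_atoms P mA hk1) -signr_odd.
by split=> [/negbTE|] ->; rewrite ?expr0 ?expr1 ?mul1r ?mulN1r; lra.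
Qed.
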